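(* If $W$ is a non-empty null-homotopic closed walk, then at least two segments of $W$ are retractable.
   Context: A closed walk in a simple graph is a cyclic sequence $u_1,\ldots,u_m$ of vertices with $u_iu_{i+1}$ an edge for $i<m$ and $u_mu_1$ an edge. A segment is a cyclically consecutive triple $u_iu_{i+1}u_{i+2}$ (indices mod $m$); it is retractable if $u_i=u_{i+2}$, and deleting $u_{i+1}$ and $u_{i+2}$ is a one-step retraction (for a closed walk of length two the result is the empty walk). The topological retract is obtained by performing one-step retractions as long as possible (it is unique). A closed walk is null-homotopic if its topological retract is empty. *)

From mathcomp Require Import all_boot.
Set Implicit Arguments. Unset Strict Implicit. Unset Printing Implicit Defensive.

(* A simple graph: vertex type T : finType, adjacency e : rel T, symmetric and
   irreflexive. *)
Definition closed_walk (T : eqType) (e : rel T) (w : seq T) : bool := cycle e w.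

(* The segment starting at position i (0 <= i < size w) is the cyclic triple
   w_i w_{i+1} w_{i+2} (indices mod m); it is retractable iff w_i = w_{i+2}. *)
Definition retractable (T : eqType) (w : seq T) (i : nat) : bool :=
  match w with
  | [::] => false
  | x :: _ => nth x w (i %% size w) == nth x w ((i + 2) %% size w)
  end.

(* The result
   is a cyclic sequence; we return it rotated to start at w_i. *)
Definition retract1 (T : eqType) (w : seq T) (i : nat) : seq T :=
  if size w <= 2 then [::] else
  match rot i w with
  | a :: _ :: _ :: r => a :: r
  | _ => [::]
  end.

Definition retract_step (T : eqType) (w : seq T) : seq T :=
  let i := find (retractable w) (iota 0 (size w)) in
  if i < size w then retract1 w i else w.

(* Topological retract: perform one-step retractions as long as possible.
   Each step decreases the length, so size w iterations suffice. *)
Definition topological_retract (T : eqType) (w : seq T) : seq T :=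
  iter (size w) (@retract_step T) w.

Definition null_homotopic (T : eqType) (w : seq T) : bool :=
  topological_retract w == [::].

Definition num_retractable (T : eqType) (w : seq T) : nat :=
  count (retractable w) (iota 0 (size w)).

From mathcomp Require Import all_boot.
From mathcomp Require Import zify.

Set Implicit Arguments.
Unset Strict Implicit.
Unset Printing Implicit Defensive.

(* A one-step retraction turns a closed walk, rotated so that the retracted
   segment comes first, from [a b a r] into [a r].  Every segment of [a r]
   except the last one reappears, shifted by two positions, in [a b a r], and
   [a b a] itself is retractable, so retractions never increase the number of
   retractable segments.  A null-homotopic walk retracts down to a closed walk
   of length at most two before becoming empty; length one is impossible in a
   loopless graph and a walk [x y] has two retractable segments. *)

Lemma count_iota_periodic (P : pred nat) n k :
  (forall j, P (j + n) = P j) -> count P (iota k n) = count P (iota 0 n).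
Proof.
move=> P_per; elim: k => // k <-; case: n P_per => // n P_per.
by rewrite -(addn1 n) iotaD count_cat /= addn0 addSnnS P_per addn1 addnC.
Qed.

Section Retractable.
Variable T : eqType.
Implicit Types (w r : seq T) (a b : T).

Lemma nth_rot (x0 : T) w k j : k <= size w -> j < size w ->
  nth x0 (rot k w) j = nth x0 w ((k + j) %% size w).
Proof.
move=> le_k_w lt_j_w; rewrite /rot nth_cat size_drop.
case: ifP => lt_j_drop.
  by rewrite nth_drop modn_small //; lia.
rewrite nth_take; last by lia.
have -> : k + j = size w + (j - (size w - k)) by lia.
by rewrite modnDl modn_small //; lia.
Qed.

Lemma retractableE (x0 : T) w i : 0 < size w ->
  retractable w i = (nth x0 w (i %% size w) == nth x0 w ((i + 2) %% size w)).
Proof.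
case: w => [|x w] //= _.
by rewrite !(set_nth_default x0 x) ?ltn_pmod.
Qed.

Lemma retractable_rot w k j : k < size w ->
  retractable (rot k w) j = retractable w (k + j).
Proof.
case: w => [|x w] // lt_k_w.
rewrite !(retractableE x) ?size_rot // !nth_rot ?ltn_pmod ?(ltnW lt_k_w) //.
by rewrite !modnDmr addnA.
Qed.

Lemma retractable_periodic w j : retractable w (j + size w) = retractable w j.
Proof. by case: w => [|x w] //; rewrite !(retractableE x) // addnAC !modnDr. Qed.

Lemma num_retractable_rot w k : k < size w ->
  num_retractable (rot k w) = num_retractable w.
Proof.
move=> lt_k_w; rewrite /num_retractable size_rot.
rewrite (eq_count (a2 := retractable w \o addn k)); last first.
  by move=> j /=; rewrite retractable_rot.
rewrite -count_map -iotaDl addn0.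
exact/count_iota_periodic/retractable_periodic.
Qed.

Lemma nth_spur a b r k : k <= size r + 1 ->
  nth a [:: a, b, a & r] ((k + 2) %% (size r + 3)) =
  nth a (a :: r) (k %% (size r + 1)).
Proof.
move=> le_k_r; case: (ltnP k (size r + 1)) => lt_k_r.
  by rewrite addn2 !modn_small //; lia.
have -> : k = size r + 1 by lia.
by rewrite -addnA modnn modnn.
Qed.

Lemma retractable_spur a b r j : j < size r ->
  retractable [:: a, b, a & r] (2 + j) = retractable (a :: r) j.
Proof.
move=> lt_j_r; rewrite addnC !(retractableE a) //.
have -> : size [:: a, b, a & r] = size r + 3 by rewrite /= addn3.
have -> : size (a :: r) = size r + 1 by rewrite addn1.
by rewrite !nth_spur //; lia.
Qed.

Lemma num_retractable_spur a b r :
  num_retractable (a :: r) <= num_retractable [:: a, b, a & r].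
Proof.
rewrite /num_retractable.
have -> : size (a :: r) = size r + 1 by rewrite addn1.
have -> : size [:: a, b, a & r] = 2 + (size r + 1) by rewrite /= addn1.
rewrite !iotaD !count_cat addnA.
have retr0 : retractable [:: a, b, a & r] 0.
  by rewrite (retractableE a) //= !modn_small.
have shift : count (retractable (a :: r)) (iota 0 (size r))
           = count (retractable [:: a, b, a & r]) (iota 2 (size r)).
  rewrite (iotaDl 2 0) count_map; apply: eq_in_count => j.
  by rewrite mem_iota add0n => /andP[_ /(retractable_spur a b)].
have head_retr : 0 < count (retractable [:: a, b, a & r]) (iota 0 2).
  by rewrite -has_count; apply/hasP; exists 0.
have last_le1 : count (retractable (a :: r)) (iota (size r) 1) <= 1.
  exact: count_size.
rewrite !add0n; lia.
Qed.

Lemma num_retractable_pair (x y : T) : num_retractable [:: x; y] = 2.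
Proof. by rewrite /num_retractable /retractable /= !eqxx. Qed.

Lemma retract_step_spur w : 2 < size w -> has (retractable w) (iota 0 (size w)) ->
  exists i a b r,
    [/\ i < size w, rot i w = [:: a, b, a & r] & retract_step w = a :: r].
Proof.
move=> w_big has_retr; set i := find (retractable w) (iota 0 (size w)).
have lt_i_w : i < size w by move: has_retr; rewrite has_find size_iota.
have retr_i : retractable (rot i w) 0.
  by rewrite retractable_rot // addn0; have := nth_find 0 has_retr; rewrite nth_iota.
exists i; rewrite /retract_step /retract1 -/i lt_i_w leqNgt w_big /=.
have : 2 < size (rot i w) by rewrite size_rot.
case: (rot i w) retr_i => [|a [|b [|c r]]] // retr_i _.
by move: retr_i; rewrite (retractableE a) //= => /eqP <-; exists a, b, r.
Qed.

Lemma retract_step_id w : ~~ has (retractable w) (iota 0 (size w)) ->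
  retract_step w = w.
Proof. by rewrite /retract_step has_find size_iota => /negbTE ->. Qed.

Lemma cycle_spur (e : rel T) a b r : cycle e [:: a, b, a & r] -> cycle e (a :: r).
Proof. by case/and3P. Qed.

Lemma num_retractable_iter_nil (e : rel T) : irreflexive e -> forall k w,
  cycle e w -> w != [::] -> iter k (@retract_step T) w = [::] ->
  2 <= num_retractable w.
Proof.
move=> e_irr; elim=> [|k IH] w walk_w w_nonnil.
  by move=> /= w_nil; rewrite w_nil in w_nonnil.
rewrite iterSr; case: (ltnP 2 (size w)) => [w_big|w_small].
  have [has_retr|no_retr] := boolP (has (retractable w) (iota 0 (size w))).
    have [i [a [b [r [lt_i_w rot_w ->]]]]] := retract_step_spur w_big has_retr.
    rewrite -(num_retractable_rot lt_i_w) rot_w => retr_nil.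
    apply: leq_trans (num_retractable_spur a b r); apply: IH => //.
    by apply: (cycle_spur (b := b)); rewrite -rot_w rot_cycle.
  by rewrite retract_step_id //; apply: IH.
case: w w_small walk_w w_nonnil => [|x [|y [|z w]]] // _.
  by rewrite /= e_irr.
by rewrite num_retractable_pair.
Qed.

End Retractable.

Theorem mainTheorem13 (T : finType) (e : rel T)
  (e_sym : symmetric e) (e_irr : irreflexive e) (w : seq T) :
  closed_walk e w -> w != [::] -> null_homotopic w ->
  2 <= num_retractable w.
Proof.
move=> walk_w w_nonnil /eqP retract_nil.
exact: (num_retractable_iter_nil e_irr walk_w w_nonnil retract_nil).
Qed.
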